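(* Let $m\ge1$ and let $X\subset\sqrt{m}\,\mathbb{S}^{m-1}$ be a spherical $2$-design with $|X|=n$ which is an $s$-distance set of degree $S=s$. If $\frac1n q_i((nG)^\circ)=F_i$ for all $i\in\{0,1,\dots,s\}$, then $X$ carries a $Q$-polynomial association scheme; namely $X$ has the structure of a $Q$-polynomial association scheme with respect to the idempotents $F_0,\dots,F_s$.
   Context: $\sqrt{m}\,\mathbb{S}^{m-1}=\{\bm x\in\mathbb{R}^m:\bm x\cdot\bm x=m\}$. $A(X)=\{\bm x\cdot\bm y:\bm x\ne\bm y\in X\}$, $A'(X)=A(X)\cup\{m\}$; $s$-distance set: $|A(X)|=s$. Spherical $2$-design: the average over $X$ of every polynomial of degree $\le2$ equals its average over the sphere. $C(X)$: real functions on $X$ with $(f,g)=\frac1n\sum f g$; $\zeta_{\bm a}(p)(\bm x)=p(\bm a\cdot\bm x)$; $\mathrm{Pol}_0$ = constants, $\mathrm{Pol}_1=\mathrm{Span}\{\zeta_{\bm a}(p):\deg p\le1\}$, $\mathrm{Pol}_k=\mathrm{Span}\{fg:f\in\mathrm{Pol}_1,g\in\mathrm{Pol}_{k-1}\}$; degree $S=\min\{i:\mathrm{Pol}_i(X)=C(X)\}$; $\mathrm{Harm}_0=\mathrm{Pol}_0$, $\mathrm{Harm}_k=\mathrm{Pol}_k\cap\mathrm{Pol}_{k-1}^\perp$; $F_i$ ($0\le i\le S$) is the matrix of the orthogonal projection onto $\mathrm{Harm}_i(X)$, with $(Mf)(\bm x)=\sum_{\bm y}M_{\bm x,\bm y}f(\bm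 y)$. $G=\frac1n(\bm x\cdot\bm y)_{\bm x,\bm y}$; $p(M^\circ)$ is entrywise application of $p$. $\kappa_\alpha=|\{(\bm x,\bm y)\in X^2:\bm x\cdot\bm y=\alpha\}|$, $\langle p,q\rangle=\frac1{n^2}\sum_{\alpha\in A'(X)}\kappa_\alpha p(\alpha)q(\alpha)$; predegree polynomials $q_0,\dots,q_s$: $\deg q_k=k$, $\langle q_k,q_h\rangle=\delta_{k,h}q_k(m)$. With $R_\alpha=\{(\bm x,\bm y):\bm x\cdot\bm y=\alpha\}$, ''$X$ has the structure of a $Q$-polynomial association scheme with respect to the idempotents $F_0,\dots,F_s$'' means $(X,\{R_\alpha\}_{\alpha\in A'(X)})$ is a symmetric association scheme (the span of the adjacency matrices of the $R_\alpha$ is closed under matrix multiplication, with the standard axioms) whose primitive idempotents are $F_0,\dots,F_s$, and for each $i$ there is a polynomial $v_i^*$ of degree $i$ with $nF_i=v_i^*((nF_1)^\circ)$. *)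

From HB Require Import structures.
From mathcomp Require Import all_boot all_order all_algebra.
Set Implicit Arguments. Unset Strict Implicit. Unset Printing Implicit Defensive.
Import Order.TTheory GRing.Theory Num.Theory.
Local Open Scope ring_scope.

Section Defs.
Variables (R : realFieldType) (m n : nat) (x : 'I_n -> 'rV[R]_m).

Definition dot (u v : 'rV[R]_m) : R := \sum_(k < m) u 0 k * v 0 k.

Definition nG : 'M[R]_n := \matrix_(a < n, b < n) dot (x a) (x b).

Definition Aset : seq R :=
  undup [seq dot (x p.1) (x p.2) | p <- enum [pred p : 'I_n * 'I_n | p.1 != p.2]].
Definition sdist : nat := size Aset.
Definition Aset' : seq R := undup (m%:R :: Aset).

(* Spherical 2-design on sqrt(m) S^{m-1}: for every polynomial of degree <= 2,
   p(z) = c + b.z + sum_{j,k} A_jk z_j z_k, the average over X equals the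
   average over the sphere sqrt(m) S^{m-1}, which is c + tr A
   (sphere averages: z_j -> 0, z_j z_k -> delta_jk * m/m). *)
Definition sph2design : Prop :=
  forall (c : R) (b : 'rV[R]_m) (A : 'M[R]_m),
    (n%:R)^-1 * \sum_(a < n) (c + dot b (x a)
         + \sum_(j < m) \sum_(k < m) A j k * x a 0 j * x a 0 k)
    = c + \tr A.

(* Functions in C(X) are row vectors f : 'rV_n, f(x_a) = f 0 a.
   Subspaces of C(X) are represented by matrices whose rows span them. *)
Definition one_fun : 'rV[R]_n := const_mx 1.

Definition Pol1gen : 'M[R]_(1 + m, n) :=
  col_mx one_fun (\matrix_(j < m, a < n) x a 0 j).

(* Pol_0 = constants; Pol_{k+1} = span { f g : f in Pol_1, g in Pol_k }
   (pointwise products, spanned by products of spanning vectors). *)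
Fixpoint Pol (k : nat) : 'M[R]_n :=
  match k with
  | 0 => <<one_fun>>%MS
  | k'.+1 => (\sum_(i < 1 + m) \sum_(j < n)
                <<map2_mx *%R (row i Pol1gen) (row j (Pol k'))>>)%MS
  end.

Definition degree_is (S : nat) : Prop :=
  row_full (Pol S) /\ (forall i, (i < S)%N -> ~~ row_full (Pol i)).

(* Harm_0 = Pol_0, Harm_k = Pol_k  /\  Pol_{k-1}^perp  (perp w.r.t.
   (f,g) = 1/n sum f g, i.e. the standard dot product up to 1/n). *)
Definition Harm (k : nat) : 'M[R]_n :=
  match k with
  | 0 => Pol 0
  | k'.+1 => (Pol k :&: kermx (Pol k')^T)%MS
  end.

(* Action of a matrix on functions: (M f)(x) = sum_y M_{x,y} f(y). *)
Definition mxapp (M : 'M[R]_n) (f : 'rV[R]_n) : 'rV[R]_n := f *m M^T.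

Definition is_orthproj (V P : 'M[R]_n) : Prop :=
  forall f : 'rV[R]_n,
    (mxapp P f <= V)%MS /\ (f - mxapp P f) *m V^T = 0.

Definition kappa (al : R) : nat :=
  #|[set p : 'I_n * 'I_n | dot (x p.1) (x p.2) == al]|.

Definition pinner (p r : {poly R}) : R :=
  ((n ^ 2)%:R)^-1 * \sum_(al <- Aset') (kappa al)%:R * p.[al] * r.[al].

Definition predegree (q : nat -> {poly R}) : Prop :=
  (forall k, (k <= sdist)%N -> size (q k) = k.+1) /\
  (forall k h, (k <= sdist)%N -> (h <= sdist)%N ->
     pinner (q k) (q h) = (k == h)%:R * (q k).[m%:R]).

Definition Adj (i : 'I_(size Aset')) : 'M[R]_n :=
  \matrix_(a < n, b < n) (dot (x a) (x b) == nth 0 Aset' i)%:R.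

Definition inBM (M : 'M[R]_n) : Prop :=
  exists c : 'I_(size Aset') -> R, M = \sum_(i < size Aset') c i *: Adj i.

Definition sym_assoc_scheme : Prop :=
  [/\ exists i0, Adj i0 = 1%:M,
      \sum_(i < size Aset') Adj i = const_mx 1,
      forall i, Adj i != 0,
      forall i, (Adj i)^T = Adj i
    & forall i j, inBM (Adj i *m Adj j)].

Definition idem (E : 'M[R]_n) : Prop := E *m E = E.

Definition primitive_idempotents (s : nat) (F : nat -> 'M[R]_n) : Prop :=
  [/\ forall i, (i <= s)%N -> [/\ inBM (F i), idem (F i) & F i != 0],
      forall i j, (i <= s)%N -> (j <= s)%N -> i != j -> F i *m F j = 0,
      \sum_(i < s.+1) F i = 1%:M
    & forall i, (i <= s)%N ->
        ~ exists E1 E2 : 'M[R]_n,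
            [/\ inBM E1, inBM E2, idem E1, idem E2 &
             [/\ E1 != 0, E2 != 0, E1 *m E2 = 0 & E1 + E2 = F i]]].

Definition QPAS (s : nat) (F : nat -> 'M[R]_n) : Prop :=
  [/\ sym_assoc_scheme,
      primitive_idempotents s F
    & forall i, (i <= s)%N -> exists v : {poly R},
        size v = i.+1 /\
        n%:R *: F i = map_mx (fun t => v.[t]) (n%:R *: F 1%N)].

End Defs.

From HB Require Import structures.
From mathcomp Require Import all_boot all_order all_algebra ring.
Import Order.TTheory GRing.Theory Num.Theory.
Local Open Scope ring_scope.
Set Implicit Arguments. Unset Strict Implicit. Unset Printing Implicit Defensive.

(* The F_i are orthogonal projections onto the mutually orthogonal spaces
   Harm_i, hence pairwise orthogonal idempotents; F_i is nonzero because q_i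
   has degree i <= s and so cannot vanish at all s + 1 points of A'(X).  As
   polynomials in the Gram matrix they lie in the span of the s + 1 adjacency
   matrices, and being linearly independent they span it.  Hence that span is
   the algebra with basis F_0, ..., F_s: it is closed under products, the
   identity (the adjacency matrix of the inner product m) equals the sum of
   the F_i, and the F_i are primitive.  Finally q_1 has degree 1, so q_i is a
   polynomial of degree i in q_1. *)

Section Dot.
Variables (R : realFieldType) (m : nat).
Implicit Types u v : 'rV[R]_m.

Lemma dotC u v : dot u v = dot v u.
Proof. by apply: eq_bigr => k _; rewrite mulrC. Qed.

Lemma dotBB u v : dot (u - v) (u - v) = dot u u + dot v v - (dot u v) *+ 2.
Proof.
rewrite /dot -sumrMnl -big_split /= -sumrB; apply: eq_bigr => k _.
by rewrite !mxE; ring.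
Qed.

Lemma dot_self_eq0 u : dot u u = 0 -> u = 0.
Proof.
move=> /eqP; rewrite psumr_eq0 => [/allP u0|k _]; last by rewrite -expr2 sqr_ge0.
apply/rowP => k; rewrite mxE.
by have := u0 k (mem_index_enum k); rewrite /= mulf_eq0 orbb => /eqP.
Qed.

Lemma dot_eq_norm (c : R) u v :
  dot u u = c -> dot v v = c -> dot u v = c -> u = v.
Proof.
move=> uc vc uvc; apply/eqP; rewrite -subr_eq0; apply/eqP/dot_self_eq0.
by rewrite dotBB uc vc uvc mulr2n subrr.
Qed.

Lemma mul_tr_dot u v : (u *m v^T) 0 0 = dot u v.
Proof. by rewrite mxE; apply: eq_bigr => k _; rewrite mxE. Qed.

End Dot.

Section OrthogonalProjection.
Variables (R : realFieldType) (n : nat).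
Implicit Types (f g : 'rV[R]_n) (V P : 'M[R]_n).

Lemma sub_orth_eq0 p (W : 'M[R]_(p, n)) g : (g <= W)%MS -> g *m W^T = 0 -> g = 0.
Proof.
move=> /submxP [D ->] gW0; apply: dot_self_eq0; rewrite -mul_tr_dot.
by rewrite trmx_mul mulmxA gW0 mul0mx mxE.
Qed.

Lemma orthproj_id V P g : is_orthproj V P -> (g <= V)%MS -> mxapp P g = g.
Proof.
move=> /(_ g) [PgV gPg_orth] gV; apply/eqP; rewrite eq_sym -subr_eq0; apply/eqP.
by apply: (sub_orth_eq0 _ gPg_orth); apply: addmx_sub; rewrite ?eqmx_opp.
Qed.

Lemma orthproj_orth p (W : 'M[R]_(p, n)) V P g :
  W *m V^T = 0 -> is_orthproj V P -> (g <= W)%MS -> mxapp P g = 0.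
Proof.
move=> WV0 /(_ g) [PgV] /eqP; rewrite mulmxBl subr_eq0 => /eqP gV /submxP [D gE].
by apply: (sub_orth_eq0 PgV); rewrite -gV gE -mulmxA WV0 mulmx0.
Qed.

End OrthogonalProjection.

Section Harmonic.
Variables (R : realFieldType) (m n : nat) (x : 'I_n -> 'rV[R]_m).

Lemma Pol_subS k : (Pol x k <= Pol x k.+1)%MS.
Proof.
apply/row_subP => j; apply: (sumsmx_sup (0 : 'I_(1 + m))) => //.
apply: (sumsmx_sup j) => //; rewrite genmxE.
suff -> : map2_mx *%R (row 0 (Pol1gen x)) (row j (Pol x k)) = row j (Pol x k) by [].
apply/rowP => c; rewrite !mxE /Pol1gen.
by case: splitP => [i _|//]; rewrite mxE mul1r.
Qed.

Lemma Pol_sub i j : (i <= j)%N -> (Pol x i <= Pol x j)%MS.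
Proof.
move=> /subnK <-; elim: (j - i)%N => [//|k IH].
by rewrite addSn (submx_trans IH (Pol_subS _)).
Qed.

Lemma Harm_sub_Pol i : (Harm x i <= Pol x i)%MS.
Proof. by case: i => [|i] //=; exact: capmxSl. Qed.

Lemma Harm_orth_lt i j : (i < j)%N -> Harm x j *m (Harm x i)^T = 0.
Proof.
case: j => [//|j]; rewrite ltnS => ij.
have /submxP [D ->] := submx_trans (Harm_sub_Pol i) (Pol_sub ij).
have /sub_kermxP Hj0 : (Harm x j.+1 <= kermx (Pol x j)^T)%MS by exact: capmxSr.
by rewrite trmx_mul mulmxA Hj0 mul0mx.
Qed.

Lemma Harm_orth i j : i != j -> Harm x j *m (Harm x i)^T = 0.
Proof.
case: (ltngtP i j) => [/Harm_orth_lt //|ji _|-> /eqP //].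
by apply: trmx_inj; rewrite trmx_mul trmxK Harm_orth_lt // trmx0.
Qed.

End Harmonic.

Section LinearSpan.
Variables (R : fieldType) (n k : nat) (G : 'I_k -> 'M[R]_n).

Lemma mxvec_lin_comb (c : 'I_k -> R) :
  mxvec (\sum_i c i *: G i) = (\row_i c i) *m \matrix_i mxvec (G i).
Proof.
rewrite mulmx_sum_row linear_sum; apply: eq_bigr => i _.
by rewrite linearZ /= mxE rowK.
Qed.

Lemma memmx_spanP M :
  (M \in \matrix_i mxvec (G i))%MS <-> exists c, M = \sum_i c i *: G i.
Proof.
split=> [/submxP [D MD]|[c ->]]; last by rewrite mxvec_lin_comb submxMl.
exists (D 0); apply: (can_inj mxvecK).
by rewrite mxvec_lin_comb MD; congr mulmx; apply/rowP => i; rewrite mxE.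
Qed.

Lemma memmx_span_gen i : (G i \in \matrix_j mxvec (G j))%MS.
Proof. by have := row_sub i (\matrix_j mxvec (G j)); rewrite rowK. Qed.

End LinearSpan.

Section OrthogonalIdempotents.
Variables (R : fieldType) (n p s : nat) (A : 'I_p -> 'M[R]_n) (E : nat -> 'M[R]_n).
Hypothesis span_card : (p <= s.+1)%N.
Hypothesis E_in_span : forall i, (i <= s)%N -> (E i \in \matrix_j mxvec (A j))%MS.
Hypothesis E_idem : forall i, (i <= s)%N -> E i *m E i = E i.
Hypothesis E_orth : forall i j, (i <= s)%N -> (j <= s)%N -> i != j -> E i *m E j = 0.
Hypothesis E_neq0 : forall i, (i <= s)%N -> E i != 0.

Local Notation spanA := (\matrix_j mxvec (A j)).
Local Notation spanE := (\matrix_(i < s.+1) mxvec (E i)).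

Lemma lin_comb_mulE (c : 'I_s.+1 -> R) (j : 'I_s.+1) :
  (\sum_i c i *: E i) *m E j = c j *: E j.
Proof.
rewrite mulmx_suml (bigD1 j) //= -scalemxAl (E_idem (ltn_ord j)) big1 ?addr0 // => i ij.
by rewrite -scalemxAl E_orth ?scaler0 // -ltnS ltn_ord.
Qed.

Lemma row_free_spanE : row_free spanE.
Proof.
apply: inj_row_free => v vE0; apply/rowP => j; rewrite [RHS]mxE.
have : \sum_i v 0 i *: E i = 0.
  apply: (can_inj mxvecK); rewrite mxvec_lin_comb linear0 -vE0.
  by congr mulmx; apply/rowP => i; rewrite mxE.
move/(congr1 (mulmx^~ (E j))); rewrite lin_comb_mulE mul0mx => /eqP.
by rewrite scaler_eq0 (negbTE (E_neq0 (ltn_ord j))) orbF => /eqP.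
Qed.

Lemma spanE_sub_spanA : (spanE <= spanA)%MS.
Proof. by apply/row_subP => i; rewrite rowK (E_in_span (ltn_ord i)). Qed.

Lemma spanA_sub_spanE : (spanA <= spanE)%MS.
Proof.
have [le_EA <-] := mxrank_leqif_sup spanE_sub_spanA.
apply/eqP/anti_leq; rewrite le_EA (eqnP row_free_spanE).
exact: leq_trans (rank_leq_row _) span_card.
Qed.

Lemma spanA_coordE M :
  (M \in spanA)%MS -> exists c : 'I_s.+1 -> R, M = \sum_i c i *: E i.
Proof. by move=> MA; apply/memmx_spanP; exact: submx_trans MA spanA_sub_spanE. Qed.

Lemma lin_combE_in_spanA (c : 'I_s.+1 -> R) : (\sum_i c i *: E i \in spanA)%MS.
Proof.
by apply: submx_trans spanE_sub_spanA; apply/memmx_spanP; exists c.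
Qed.

Lemma mulmx_spanA M N : (M \in spanA)%MS -> (N \in spanA)%MS -> (M *m N \in spanA)%MS.
Proof.
move=> /spanA_coordE [c ->] /spanA_coordE [d ->].
suff -> : (\sum_i c i *: E i) *m (\sum_i d i *: E i) = \sum_i (c i * d i) *: E i.
  exact: lin_combE_in_spanA.
rewrite mulmx_sumr; apply: eq_bigr => i _.
by rewrite -scalemxAr lin_comb_mulE scalerA mulrC.
Qed.

Lemma scaleE_inj (a b : R) j : (j <= s)%N -> a *: E j = b *: E j -> a = b.
Proof.
move=> js /eqP; rewrite -subr_eq0 -scalerBl scaler_eq0 (negbTE (E_neq0 js)) orbF.
by rewrite subr_eq0 => /eqP.
Qed.

Lemma sum_E_eq1 : (1%:M \in spanA)%MS -> \sum_(i < s.+1) E i = 1%:M.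
Proof.
move=> /spanA_coordE [c c1]; rewrite c1; apply: eq_bigr => j _.
suff -> : c j = 1 by rewrite scale1r.
apply: (scaleE_inj (ltn_ord j)).
by rewrite -lin_comb_mulE -c1 mul1mx scale1r.
Qed.

Lemma E_indecomposable i E1 E2 : (i <= s)%N ->
  (E1 \in spanA)%MS -> E1 *m E1 = E1 -> E1 *m E2 = 0 -> E1 + E2 = E i ->
  E1 != 0 -> E2 = 0.
Proof.
move=> le_is /spanA_coordE [c cE1] E1_idem E1E2 E1E2i E1_neq0.
pose i' : 'I_s.+1 := Ordinal (le_is : (i < s.+1)%N).
have E1_scale : E1 = c i' *: E i.
  by rewrite -[LHS]E1_idem -[in X in _ *m X](addrK E2 E1) E1E2i mulmxBr E1E2
    subr0 {1}cE1 (lin_comb_mulE c i').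
have E1_sq : E1 = (c i' * c i') *: E i.
  by rewrite -{1}E1_idem E1_scale -scalemxAl -scalemxAr (E_idem le_is) scalerA.
have ci1 : c i' = 1.
  have c_neq0 : c i' != 0.
    by apply: contraNneq E1_neq0 => c0; rewrite E1_scale c0 scale0r.
  apply: (mulfI c_neq0); apply: (scaleE_inj le_is).
  by rewrite mulr1 -E1_scale -E1_sq.
by rewrite -[E2](addKr E1) E1E2i {1}E1_scale ci1 scale1r addNr.
Qed.

End OrthogonalIdempotents.

Lemma sum_nth_indicator (R : nzRingType) (r : seq R) (d : R) (g : R -> R) :
  uniq r -> d \in r ->
  \sum_(i < size r) g (nth 0 r i) * (d == nth 0 r i)%:R = g d.
Proof.
move=> r_uniq d_r.
rewrite -(big_mkord xpredT (fun i => g (nth 0 r i) * (d == nth 0 r i)%:R)).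
rewrite -(big_nth 0 xpredT (fun y => g y * (d == y)%:R)).
rewrite (bigD1_seq d) //= eqxx mulr1 big1 ?addr0 // => y.
by rewrite eq_sym => /negbTE ->; rewrite mulr0.
Qed.

Section SphericalCode.
Variables (R : realFieldType) (m n : nat) (x : 'I_n -> 'rV[R]_m).
Hypothesis x_inj : injective x.
Hypothesis x_norm : forall a, dot (x a) (x a) = m%:R.

Lemma dot_eq_m a b : dot (x a) (x b) = m%:R -> a = b.
Proof. by move=> abm; apply/x_inj/(dot_eq_norm (x_norm a) (x_norm b)). Qed.

Lemma mem_Aset a b : a != b -> dot (x a) (x b) \in Aset x.
Proof. by move=> ab; rewrite mem_undup; apply/mapP; exists (a, b); rewrite ?mem_enum. Qed.

Lemma Aset_dot al : al \in Aset x -> exists a b, a != b /\ dot (x a) (x b) = al.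
Proof. by rewrite mem_undup => /mapP [[a b]]; rewrite mem_enum => ab ->; exists a, b. Qed.

Lemma Aset'E : Aset' x = m%:R :: Aset x.
Proof.
have m_notin : m%:R \notin Aset x.
  by apply/negP => /Aset_dot [a [b [ab /dot_eq_m abE]]]; rewrite abE eqxx in ab.
by rewrite /Aset' /= (negbTE m_notin) undup_id // undup_uniq.
Qed.

Lemma size_Aset' : size (Aset' x) = (sdist x).+1.
Proof. by rewrite Aset'E. Qed.

Lemma mem_Aset'_dot a b : dot (x a) (x b) \in Aset' x.
Proof.
rewrite Aset'E inE; case: (eqVneq a b) => [->|ab]; first by rewrite x_norm eqxx.
by rewrite mem_Aset ?orbT.
Qed.

Lemma Aset'_dot al : (0 < n)%N -> al \in Aset' x -> exists a b, dot (x a) (x b) = al.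
Proof.
move=> n_gt0; rewrite Aset'E inE => /orP [/eqP ->|/Aset_dot [a [b [_ <-]]]].
  by exists (Ordinal n_gt0), (Ordinal n_gt0).
by exists a, b.
Qed.

Lemma map_dot_Adj (g : R -> R) :
  \matrix_(a, b) g (dot (x a) (x b)) =
  \sum_(i < size (Aset' x)) g (nth 0 (Aset' x) i) *: Adj i.
Proof.
apply/matrixP => a b; rewrite mxE summxE.
rewrite -(sum_nth_indicator g (undup_uniq _) (mem_Aset'_dot a b)).
by apply: eq_bigr => i _; rewrite !mxE.
Qed.

Lemma Adj_m_eq1 : exists i : 'I_(size (Aset' x)), Adj i = 1%:M.
Proof.
have i0 : (0 < size (Aset' x))%N by rewrite size_Aset'.
have nth_i0 : nth 0 (Aset' x) (Ordinal i0) = m%:R by rewrite /= Aset'E.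
exists (Ordinal i0); apply/matrixP => a b; rewrite !mxE nth_i0.
case: (eqVneq a b) => [->|ab]; first by rewrite x_norm eqxx.
by case: eqP => // /dot_eq_m abE; rewrite abE eqxx in ab.
Qed.

Lemma sum_Adj : \sum_(i < size (Aset' x)) Adj i = const_mx 1.
Proof.
under eq_bigr do rewrite -[Adj _]scale1r.
by rewrite -(map_dot_Adj (fun => 1)); apply/matrixP => a b; rewrite !mxE.
Qed.

Lemma Adj_neq0 (i : 'I_(size (Aset' x))) : (0 < n)%N -> Adj i != 0.
Proof.
move=> n_gt0; have [a [b abi]] := Aset'_dot n_gt0 (mem_nth 0 (ltn_ord i)).
apply/eqP => /matrixP /(_ a b); rewrite !mxE abi eqxx => /eqP.
by rewrite oner_eq0.
Qed.

Lemma Adj_sym (i : 'I_(size (Aset' x))) : (Adj i)^T = Adj i.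
Proof. by apply/matrixP => a b; rewrite !mxE dotC. Qed.

End SphericalCode.

Lemma comp_poly_size2_inv (R : fieldType) (p r : {poly R}) :
  size p = 2 -> exists v : {poly R}, size v = size r /\ forall t, r.[t] = v.[p.[t]].
Proof.
move=> p2; set a := p`_1; set b := p`_0.
have a_neq0 : a != 0.
  by rewrite /a (_ : 1%N = (size p).-1) -?lead_coefE ?lead_coef_eq0 -?size_poly_eq0 p2.
have pE t : p.[t] = a * t + b.
  by rewrite horner_coef p2 big_ord_recl big_ord1 /= expr0 mulr1 expr1 addrC mulrC.
set u := a^-1 *: ('X - b%:P).
have u2 : size u = 2 by rewrite size_scale ?invr_eq0 // size_XsubC.
exists (r \Po u); split=> [|t]; first by rewrite size_comp_poly2.
by rewrite horner_comp pE /u hornerZ !hornerE addrK mulKf.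
Qed.

Lemma sph2design_card_gt0 (R : realFieldType) m n (x : 'I_n -> 'rV[R]_m) :
  sph2design x -> (0 < n)%N.
Proof.
case: n x => // x /(_ 1 0 0) /eqP.
by rewrite big_ord0 mulr0 mxtrace0 addr0 eq_sym oner_eq0.
Qed.

Section PredegreeIdempotents.
Variables (R : realFieldType) (m n : nat) (x : 'I_n -> 'rV[R]_m)
  (q : nat -> {poly R}) (F : nat -> 'M[R]_n).
Hypothesis x_inj : injective x.
Hypothesis x_norm : forall a, dot (x a) (x a) = m%:R.
Hypothesis n_gt0 : (0 < n)%N.
Hypothesis q_size : forall k, (k <= sdist x)%N -> size (q k) = k.+1.
Hypothesis F_proj : forall i, (i <= sdist x)%N -> is_orthproj (Harm x i) (F i).
Hypothesis F_q : forall i, (i <= sdist x)%N ->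
  (n%:R)^-1 *: map_mx (fun t => (q i).[t]) (nG x) = F i.

Local Notation s := (sdist x).
Local Notation spanAdj := (\matrix_(i < size (Aset' x)) mxvec (Adj i)).

Lemma nF_entry i a b : (i <= s)%N -> (n%:R *: F i) a b = (q i).[dot (x a) (x b)].
Proof.
move=> le_is; rewrite -F_q // !mxE mulrA mulfV ?mul1r //.
by rewrite pnatr_eq0 -lt0n.
Qed.

Lemma F_sym i : (i <= s)%N -> (F i)^T = F i.
Proof. by move=> le_is; apply/matrixP => a b; rewrite mxE -F_q // !mxE dotC. Qed.

Lemma mxapp_F i f : (i <= s)%N -> mxapp (F i) f = f *m F i.
Proof. by move=> le_is; rewrite /mxapp F_sym. Qed.

Lemma F_in_spanAdj i : (i <= s)%N -> (F i \in spanAdj)%MS.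
Proof.
move=> le_is; apply/memmx_spanP.
exists (fun j : 'I_(size (Aset' x)) => (n%:R)^-1 * (q i).[nth 0 (Aset' x) j]).
rewrite -F_q // (_ : map_mx _ _ = \matrix_(a, b) (q i).[dot (x a) (x b)]).
  by rewrite (map_dot_Adj x_inj x_norm) scaler_sumr; under eq_bigr do rewrite scalerA.
by apply/matrixP => a b; rewrite !mxE.
Qed.

Lemma F_idem i : (i <= s)%N -> F i *m F i = F i.
Proof.
move=> le_is; apply/eqP/mulmxP => f; rewrite mulmxA -!mxapp_F //.
by rewrite (orthproj_id (F_proj le_is)) // (F_proj le_is f).1.
Qed.

Lemma F_orth i j : (i <= s)%N -> (j <= s)%N -> i != j -> F i *m F j = 0.
Proof.
move=> le_is le_js ij; apply/eqP/mulmxP => f; rewrite mulmxA mulmx0 -!mxapp_F //.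
apply: (orthproj_orth _ (F_proj le_js) (F_proj le_is f).1).
by rewrite Harm_orth // eq_sym.
Qed.

Lemma F_neq0 i : (i <= s)%N -> F i != 0.
Proof.
move=> le_is; apply/eqP => Fi0.
have qi_neq0 : q i != 0 by rewrite -size_poly_eq0 q_size.
suff /(max_poly_roots qi_neq0) : all (root (q i)) (Aset' x).
  by move=> /(_ (undup_uniq _)); rewrite size_Aset' // q_size // ltnS ltnNge le_is.
apply/allP => al /(Aset'_dot x_inj x_norm n_gt0) [a [b <-]].
by rewrite /root -nF_entry // Fi0 scaler0 mxE.
Qed.

Lemma nF_poly_nF1 i : (i <= s)%N -> exists v : {poly R},
  size v = i.+1 /\ n%:R *: F i = map_mx (fun t => v.[t]) (n%:R *: F 1%N).
Proof.
move=> le_is; have [->|i_gt0] := posnP i.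
  have /size1_polyC q0E := eq_leq (q_size (leq0n s)).
  exists (q 0); split; first exact: q_size.
  by apply/matrixP => a b; rewrite [RHS]mxE nF_entry // q0E !hornerC.
have le_1s : (1 <= s)%N := leq_trans i_gt0 le_is.
have [v [v_size qiE]] := comp_poly_size2_inv (q i) (q_size le_1s).
exists v; split; first by rewrite v_size q_size.
by apply/matrixP => a b; rewrite [RHS]mxE !nF_entry // qiE.
Qed.

End PredegreeIdempotents.

Theorem lemma3p6 (R : realFieldType) (m n : nat) (x : 'I_n -> 'rV[R]_m)
    (q : nat -> {poly R}) (F : nat -> 'M[R]_n) :
  (1 <= m)%N ->
  injective x ->
  (forall a, dot (x a) (x a) = m%:R) ->
  sph2design x ->
  degree_is x (sdist x) ->
  predegree x q ->
  (forall i, (i <= sdist x)%N -> is_orthproj (Harm x i) (F i)) ->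
  (forall i, (i <= sdist x)%N ->
     (n%:R)^-1 *: map_mx (fun t => (q i).[t]) (nG x) = F i) ->
  QPAS x (sdist x) F.
Proof.
move=> _ x_inj x_norm design _ [q_size _] F_proj F_q.
have n_gt0 := sph2design_card_gt0 design.
have card_Aset' : (size (Aset' x) <= (sdist x).+1)%N by rewrite size_Aset'.
have F_in := F_in_spanAdj x_inj x_norm F_q.
have F_idem := F_idem F_proj F_q.
have F_orth := F_orth F_proj F_q.
have F_neq0 := F_neq0 x_inj x_norm n_gt0 q_size F_q.
split; [split|split|].
- exact: Adj_m_eq1.
- exact: sum_Adj.
- by move=> i; apply: Adj_neq0.
- exact: Adj_sym.
- move=> i j; apply/memmx_spanP.
  by apply: (mulmx_spanA card_Aset' F_in F_idem F_orth F_neq0); apply: memmx_span_gen.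
- by move=> i le_is; split; [apply/memmx_spanP/F_in|apply: F_idem|apply: F_neq0].
- exact: F_orth.
- have [i Adj_i] := Adj_m_eq1 x_inj x_norm.
  apply: (sum_E_eq1 card_Aset' F_in F_idem F_orth F_neq0).
  by rewrite -Adj_i memmx_span_gen.
- move=> i le_is [E1 [E2 [/memmx_spanP E1_in _ E1_idem _ [E1_neq0 + E1E2 E12]]]].
  have E2_eq0 := E_indecomposable card_Aset' F_in F_idem F_orth F_neq0 le_is
    E1_in E1_idem E1E2 E12 E1_neq0.
  by rewrite E2_eq0 eqxx.
- exact: (nF_poly_nF1 n_gt0 q_size F_q).
Qed.
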